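(* For all colour indices $A,B$, $$ \mathcal{X}^2\,g^{AB}=\overline{(\gamma_\mu)_{gh}}\,\overline{\epsilon}^{\,CGH}\,\overline{\psi^h_H}\,\overline{\psi^g_G}\,\overline{\psi^c_C}\,\psi^{Ad}\,V^{Bef}\,\big\{2\beta_{ce}(\gamma^\mu)_{fd}+\beta_{cd}(\gamma^\mu)_{fe}\big\}, $$ where $V^{Cab}:=\epsilon^{ABC}\psi^a_A\psi^b_B$ and $\psi^{Ad}:=g^{AB}\psi^d_B$.
   Context: Colour indices $A,B,\dots\in\{1,2,3\}$; bispinor indices $a,b,\dots\in\{1,2,\dot1,\dot2\}$; summation over repeated indices; spacetime indices raised/lowered with $\eta=\mathrm{diag}(1,-1,-1,-1)$. $\Lambda$ is the complex Grassmann algebra generated by the 24 anticommuting generators $\psi^a_A,\overline{\psi^a_A}$. $g^{AB}=\delta^{AB}$, $\epsilon^{ABC}$ is the totally antisymmetric symbol with $\epsilon^{123}=1$ and $\overline{\epsilon}^{ABC}$ its complex conjugate (equal to it). Spinor structures: $\sigma^\mu=(I,\sigma^1,\sigma^2,\sigma^3)$, $\tilde\sigma^\mu=(I,-\sigma^k)$; in the ordering $(1,2,\dot1,\dot2)$, $(\gamma^\mu)^a{}_b=\begin{pmatrix}0&\tilde\sigma^\mu\\ \sigma^\mu&0\end{pmatrix}$, $\epsilon_{ab}=\begin{pmatrix}\varepsilon&0\\0&-\varepsilon\end{pmatrix}$ with $\varepsilon=\begin{pmatrix}0&1\\-1&0\end{pmatrix}$, $(\gamma^\mu)_{cb}:=(\gamma^\mu)^a{}_b\epsilon_{ac}$,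 $\beta_{ab}=\begin{pmatrix}0&I_2\\ I_2&0\end{pmatrix}$, and $\beta_{abcd}:=\tfrac12\overline{(\gamma_\mu)_{ab}}(\gamma^\mu)_{cd}$. Define $\mathcal{J}^{ab}:=\overline{\psi^a_A}g^{AB}\psi^b_B$ and $\mathcal{X}^2:=4\beta_{bcef}\beta_{ad}\{\mathcal{J}^{ad}\mathcal{J}^{be}\mathcal{J}^{cf}+2\mathcal{J}^{ae}\mathcal{J}^{bf}\mathcal{J}^{cd}\}$. *)

From HB Require Import structures.
From mathcomp Require Import all_boot all_order all_algebra.
Set Implicit Arguments. Unset Strict Implicit. Unset Printing Implicit Defensive.
Import Order.TTheory GRing.Theory Num.Theory.
Local Open Scope ring_scope.

Section Defs.
(* the complex coefficient field: any numeric closed field (e.g. C = R[i]) *)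
Variable C : numClosedFieldType.

(* spinor indices 'I_4 : 0,1,2,3 stand for 1,2,1dot,2dot; colour indices 'I_3;
   spacetime indices 'I_4 *)

(* generator labels: (bar?, (spinor index a, colour index A));
   (false,(a,A)) is psi^a_A, (true,(a,A)) is its bar *)
Definition gen := (bool * ('I_4 * 'I_3))%type.

(* an element of Lambda = coefficients on the basis monomials e_S
   (S a set of generators, e_S = product of the generators of S in the
   increasing order of enum_rank). Addition and scalar multiplication are the
   pointwise ones; the Grassmann product is [gmul] below (NOT the pointwise
   ring product of ffun). *)
Local Notation Grass := {ffun {set gen} -> C}.

(* sign of reordering e_T e_U into e_(T u U) for disjoint T, U *)
Definition gsign (T U : {set gen}) : C :=
  (-1) ^+ #|[set p : gen * gen | [&& p.1 \in T, p.2 \in U &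
                                     (enum_rank p.2 < enum_rank p.1)%N]]|.

Definition gmul (x y : Grass) : Grass :=
  [ffun S : {set gen} => \sum_(T : {set gen} | T \subset S)
                          gsign T (S :\: T) * x T * y (S :\: T)].

Definition ggen (e : gen) : Grass := [ffun S : {set gen} => (S == [set e])%:R].

Definition gscale (c : C) (x : Grass) : Grass := [ffun S : {set gen} => c * x S].
Local Notation "c *g x" := (gscale c x) (at level 40).

Definition psi (a : 'I_4) (A : 'I_3) : Grass := ggen (false, (a, A)).
Definition psib (a : 'I_4) (A : 'I_3) : Grass := ggen (true, (a, A)).

Definition tab2 (t : seq (seq C)) : 'M[C]_2 :=
  \matrix_(i < 2, j < 2) nth 0 (nth [::] t i) j.

Definition sigma_tab (mu : 'I_4) : seq (seq C) :=
  match val mu with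
  | 0 => [:: [:: 1; 0]; [:: 0; 1]]
  | 1 => [:: [:: 0; 1]; [:: 1; 0]]
  | 2 => [:: [:: 0; - 'i]; [:: 'i; 0]]
  | _ => [:: [:: 1; 0]; [:: 0; -1]]
  end.

Definition sigma (mu : 'I_4) : 'M[C]_2 := tab2 (sigma_tab mu).
Definition sigmat (mu : 'I_4) : 'M[C]_2 :=
  if val mu == 0%N then sigma mu else - sigma mu.

(* (gamma^mu)^a_b : row a, column b *)
Definition gamma_up (mu : 'I_4) : 'M[C]_4 :=
  block_mx 0 (sigmat mu) (sigma mu) 0 : 'M[C]_(2 + 2).

Definition veps : 'M[C]_2 := tab2 [:: [:: 0; 1]; [:: -1; 0]].
Definition eps_s : 'M[C]_4 := block_mx veps 0 0 (- veps) : 'M[C]_(2 + 2).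
Definition beta2 : 'M[C]_4 := block_mx 0 1%:M 1%:M 0 : 'M[C]_(2 + 2).

Definition eta (mu nu : 'I_4) : C :=
  if mu == nu then (if val mu == 0%N then 1 else -1) else 0.

(* (gamma^mu)_{cb} := (gamma^mu)^a_b epsilon_{ac} *)
Definition gamma_lo (mu : 'I_4) (c b : 'I_4) : C :=
  \sum_(a < 4) gamma_up mu a b * eps_s a c.

Definition gammaL (mu : 'I_4) (c b : 'I_4) : C :=
  \sum_(nu < 4) eta mu nu * gamma_lo nu c b.

Definition beta4 (a b c d : 'I_4) : C :=
  2^-1 * \sum_(mu < 4) (gammaL mu a b)^* * gamma_lo mu c d.

Definition gcol (A B : 'I_3) : C := (A == B)%:R.
(* totally antisymmetric symbol with eps^{123} = 1 (indices 0,1,2 here) *)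
Definition eps3 (A B D : 'I_3) : C :=
  (((A%:Z - B%:Z) * (B%:Z - D%:Z) * (D%:Z - A%:Z))%R)%:~R / 2.

Local Notation "x ** y" := (gmul x y) (at level 40, left associativity).

Definition Jc (a b : 'I_4) : Grass :=
  \sum_(A < 3) \sum_(B < 3) gcol A B *g (psib a A ** psi b B).

Definition X2 : Grass :=
  4 *g \sum_(a < 4) \sum_(b < 4) \sum_(c < 4) \sum_(d < 4) \sum_(e < 4) \sum_(f < 4)
    (beta4 b c e f * beta2 a d) *g
      (Jc a d ** Jc b e ** Jc c f + 2 *g (Jc a e ** Jc b f ** Jc c d)).

Definition psiU (A : 'I_3) (d : 'I_4) : Grass :=
  \sum_(B < 3) gcol A B *g psi d B.

Definition Vc (D : 'I_3) (a b : 'I_4) : Grass :=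
  \sum_(A < 3) \sum_(B < 3) eps3 A B D *g (psi a A ** psi b B).

Definition rhs_lemma2 (A B : 'I_3) : Grass :=
  \sum_(mu < 4) \sum_(g < 4) \sum_(h < 4) \sum_(D < 3) \sum_(G < 3) \sum_(H < 3)
  \sum_(c < 4) \sum_(d < 4) \sum_(e < 4) \sum_(f < 4)
    ((gammaL mu g h)^* * (eps3 D G H)^* *
      (2 * beta2 c e * gamma_lo mu f d + beta2 c d * gamma_lo mu f e)) *g
    (psib h H ** psib g G ** psib c D ** psiU A d ** Vc B e f).

End Defs.

Notation "c *g x" := (gscale c x) (at level 40).

Notation Grass C := {ffun {set gen} -> C}.

Notation "x ** y" := (gmul x y) (at level 40, left associativity).

From Stdlib Require Import ZArith.
From mathcomp Require Import all_boot all_order all_algebra.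
From mathcomp Require Import ring zify ssrZ.
Import GRing.Theory Num.Theory.
Local Open Scope ring_scope.
Set Implicit Arguments. Unset Strict Implicit. Unset Printing Implicit Defensive.

(* Both sides are explicit elements of the Grassmann algebra with Gaussian-integer
   coefficients, so the identity is a finite computation.  The product [gmul] is
   associative and its generators anticommute and square to zero; hence a product
   of generators is either 0 or +-1 times the monomial listing the same generators
   in decreasing order.  Both sides are reified as Gaussian-integer combinations of
   words in the 24 generators, and a normaliser proved sound for this algebra
   reduces their difference to zero by evaluation. *)

(** * The Grassmann algebra *)

Section GrassmannAlgebra.
Variable C : numClosedFieldType.
Local Notation Grass := (Grass C).
Implicit Types (x y z : Grass) (S T U : {set gen}).

Lemma gscaleE c x S : (c *g x) S = c * x S.
Proof. by rewrite ffunE. Qed.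

Lemma gscaleA c d x : c *g (d *g x) = (c * d) *g x.
Proof. by apply/ffunP=> S; rewrite !gscaleE mulrA. Qed.

Lemma gscale1 x : 1 *g x = x.
Proof. by apply/ffunP=> S; rewrite gscaleE mul1r. Qed.

Lemma gscale0 x : 0 *g x = 0.
Proof. by apply/ffunP=> S; rewrite gscaleE !ffunE mul0r. Qed.

Lemma gscaler0 c : c *g (0 : Grass) = 0.
Proof. by apply/ffunP=> S; rewrite gscaleE ffunE mulr0. Qed.

Lemma gscaleN1 x : (-1) *g x = - x.
Proof. by apply/ffunP=> S; rewrite gscaleE ffunE mulN1r. Qed.

Lemma gscaleDl c d x : (c + d) *g x = c *g x + d *g x.
Proof. by apply/ffunP=> S; rewrite !(gscaleE, ffunE) mulrDl. Qed.

Lemma gscaleDr c x y : c *g (x + y) = c *g x + c *g y.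
Proof. by apply/ffunP=> S; rewrite !(gscaleE, ffunE) mulrDr. Qed.

Lemma gscale_sumr I (r : seq I) (P : pred I) (F : I -> Grass) c :
  c *g (\sum_(i <- r | P i) F i) = \sum_(i <- r | P i) c *g F i.
Proof. exact: (big_morph (fun a => c *g a) (gscaleDr c) (gscaler0 c)). Qed.

Lemma gmulDl x y z : (x + y) ** z = x ** z + y ** z.
Proof.
apply/ffunP=> S; rewrite !ffunE -big_split; apply: eq_bigr=> T _.
by rewrite ffunE mulrDr mulrDl.
Qed.

Lemma gmulDr x y z : x ** (y + z) = x ** y + x ** z.
Proof.
apply/ffunP=> S; rewrite !ffunE -big_split; apply: eq_bigr=> T _.
by rewrite ffunE mulrDr.
Qed.

Lemma gmul0l x : 0 ** x = 0.
Proof. by apply/ffunP=> S; rewrite !ffunE big1 // => T _; rewrite ffunE mulr0 mul0r. Qed.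

Lemma gmul0r x : x ** 0 = 0.
Proof. by apply/ffunP=> S; rewrite !ffunE big1 // => T _; rewrite ffunE mulr0. Qed.

Lemma gmulZl c x y : (c *g x) ** y = c *g (x ** y).
Proof.
apply/ffunP=> S; rewrite gscaleE !ffunE mulr_sumr; apply: eq_bigr=> T _.
by rewrite gscaleE; ring.
Qed.

Lemma gmulZr c x y : x ** (c *g y) = c *g (x ** y).
Proof.
apply/ffunP=> S; rewrite gscaleE !ffunE mulr_sumr; apply: eq_bigr=> T _.
by rewrite gscaleE; ring.
Qed.

Lemma gmulNl x y : (- x) ** y = - (x ** y).
Proof. by rewrite -!gscaleN1 gmulZl. Qed.

Lemma gmul_suml I (r : seq I) (P : pred I) (F : I -> Grass) y :
  (\sum_(i <- r | P i) F i) ** y = \sum_(i <- r | P i) F i ** y.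
Proof. exact: (big_morph (fun a => a ** y) (fun a b => gmulDl a b y) (gmul0l y)). Qed.

Lemma gmul_sumr I (r : seq I) (P : pred I) (F : I -> Grass) x :
  x ** (\sum_(i <- r | P i) F i) = \sum_(i <- r | P i) x ** F i.
Proof. exact: (big_morph (fun a => x ** a) (gmulDr x) (gmul0r x)). Qed.

Definition gbasis S : Grass := [ffun T => (T == S)%:R].

Lemma grass_expand x : x = \sum_S x S *g gbasis S.
Proof.
apply/ffunP=> S; rewrite sum_ffunE (bigD1 S) //= big1 => [|T /negbTE nTS].
  by rewrite gscaleE ffunE eqxx mulr1 addr0.
by rewrite gscaleE ffunE eq_sym nTS mulr0.
Qed.

Lemma subset_setD_eqE S T U :
  (S \subset U) && (U :\: S == T) = [disjoint S & T] && (U == S :|: T).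
Proof.
apply/idP/idP=> [/andP[sSU /eqP <-] | /andP[dST /eqP ->]].
  rewrite disjoints_subset; apply/andP; split.
    by apply/subsetP=> g gS; rewrite !inE gS.
  by rewrite -{1}(setID U S) (setIidPr sSU).
rewrite subsetUl setDUl setDv set0U.
by move: dST; rewrite disjoint_sym => /setDidPl ->; rewrite eqxx.
Qed.

Lemma gmul_basis S T :
  gbasis S ** gbasis T =
  if [disjoint S & T] then gsign C S T *g gbasis (S :|: T) else 0.
Proof.
apply/ffunP=> U; rewrite ffunE.
transitivity (((S \subset U) && (U :\: S == T))%:R * gsign C S (U :\: S)).
  have [sSU|nsSU] := boolP (S \subset U); last first.
    rewrite mul0r big1 // => V sVU; rewrite !ffunE.
    by case: eqP => [eVS|]; [rewrite -eVS sVU in nsSU | rewrite mulr0 mul0r].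
  rewrite (bigD1 S) //= big1 => [|V /andP[_ /negbTE nVS]]; last first.
    by rewrite !ffunE nVS mulr0 mul0r.
  by rewrite !ffunE eqxx addr0 mulr1 mulrC.
rewrite subset_setD_eqE; case: ifP => dST /=; last by rewrite mul0r ffunE.
rewrite gscaleE ffunE; case: eqP => [->|]; last by rewrite mul0r mulr0.
rewrite mul1r mulr1 setDUl setDv set0U.
by move: dST; rewrite disjoint_sym => /setDidPl ->.
Qed.

Lemma card_setU_disjoint (T' : finType) (A B : {set T'}) :
  [disjoint A & B] -> #|A :|: B| = (#|A| + #|B|)%N.
Proof. by move=> dAB; apply/eqP; rewrite (leq_card_setU A B).2. Qed.

Lemma disjoint_setUl S T U :
  [disjoint S :|: T & U] = [disjoint S & U] && [disjoint T & U].
Proof. by rewrite !disjoints_subset subUset. Qed.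

Lemma disjoint_setUr S T U :
  [disjoint S & T :|: U] = [disjoint S & T] && [disjoint S & U].
Proof. by rewrite ![[disjoint S & _]]disjoint_sym disjoint_setUl. Qed.

Lemma gsignUl S T U :
  [disjoint S & T] -> gsign C (S :|: T) U = gsign C S U * gsign C T U.
Proof.
move=> dST; rewrite /gsign -exprD -card_setU_disjoint; last first.
  rewrite disjoints_subset; apply/subsetP=> p; rewrite !inE => /and3P[pS _ _].
  by rewrite (disjointFr dST pS).
by congr (_ ^+ _); apply: eq_card=> p; rewrite !inE andb_orl.
Qed.

Lemma gsignUr S T U :
  [disjoint T & U] -> gsign C S (T :|: U) = gsign C S T * gsign C S U.
Proof.
move=> dTU; rewrite /gsign -exprD -card_setU_disjoint; last first.
  rewrite disjoints_subset; apply/subsetP=> p; rewrite !inE => /and3P[_ pT _].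
  by rewrite (disjointFr dTU pT) andbF.
by congr (_ ^+ _); apply: eq_card=> p; rewrite !inE andb_orl andb_orr.
Qed.

Lemma gmul_basisA S T U :
  gbasis S ** gbasis T ** gbasis U = gbasis S ** (gbasis T ** gbasis U).
Proof.
rewrite (gmul_basis S T) (gmul_basis T U).
case dST: [disjoint S & T]; case dTU: [disjoint T & U];
  rewrite ?gmul0l ?gmul0r ?gmulZl ?gmulZr ?gmul_basis
          ?disjoint_setUl ?disjoint_setUr ?dST ?dTU //=;
  case: [disjoint S & U]; rewrite /= ?gscaler0 //.
by rewrite !gscaleA setUA gsignUl // gsignUr //; congr (_ *g _); ring.
Qed.

Lemma gmulA x y z : x ** y ** z = x ** (y ** z).
Proof.
rewrite [x]grass_expand !gmul_suml; apply: eq_bigr=> S _.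
rewrite !gmulZl; congr (_ *g _).
rewrite [y]grass_expand !(gmul_suml, gmul_sumr); apply: eq_bigr=> T _.
rewrite !(gmulZl, gmulZr); congr (_ *g _).
rewrite [z]grass_expand !gmul_sumr; apply: eq_bigr=> U _.
by rewrite !gmulZr gmul_basisA.
Qed.

Lemma gsign0l U : gsign C set0 U = 1.
Proof. by rewrite /gsign (_ : [set p | _] = set0) ?cards0 //; apply/setP=> p; rewrite !inE. Qed.

Lemma gsign0r S : gsign C S set0 = 1.
Proof.
by rewrite /gsign (_ : [set p | _] = set0) ?cards0 //; apply/setP=> p; rewrite !inE andbF.
Qed.

Lemma gmul1l x : gbasis set0 ** x = x.
Proof.
rewrite {1}[x]grass_expand gmul_sumr [RHS]grass_expand; apply: eq_bigr=> U _.
by rewrite gmulZr gmul_basis disjoints_subset sub0set set0U gsign0l gscale1.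
Qed.

Lemma gmul1r x : x ** gbasis set0 = x.
Proof.
rewrite {1}[x]grass_expand gmul_suml [RHS]grass_expand; apply: eq_bigr=> U _.
by rewrite gmulZl gmul_basis disjoints_subset setC0 subsetT setU0 gsign0r gscale1.
Qed.

Lemma ggen_basis g : ggen C g = gbasis [set g].
Proof. by []. Qed.

Lemma gsign_set1 g h :
  gsign C [set g] [set h] = (-1) ^+ (enum_rank h < enum_rank g)%N.
Proof.
rewrite /gsign; case: ltnP => [hg | gh]; last first.
  rewrite (_ : [set p | _] = set0) ?cards0 //; apply/setP=> -[g' h'].
  by rewrite !inE /=; apply/and3P=> -[/eqP -> /eqP ->]; rewrite ltnNge gh.
rewrite (_ : [set p | _] = [set (g, h)]) ?cards1 //; apply/setP=> -[g' h'].
rewrite !inE xpair_eqE /=; apply/and3P/andP=> [[-> ->] // | [/eqP -> /eqP ->]].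
by rewrite !eqxx.
Qed.

Lemma ggen_anticomm g h : g != h -> ggen C g ** ggen C h = - (ggen C h ** ggen C g).
Proof.
move=> ngh; have nrk : enum_rank g != enum_rank h.
  by apply: contra ngh => /eqP/enum_rank_inj ->.
rewrite !ggen_basis !gmul_basis !disjoints1 !in_set1 ifT // ifT 1?eq_sym //.
rewrite setUC -gscaleN1 gscaleA !gsign_set1; congr (_ *g _).
case: ltngtP nrk => [| | /val_inj ->]; rewrite ?eqxx //= => _.
  by rewrite expr0 mulN1r.
by rewrite expr1 mulN1r opprK.
Qed.

Lemma ggen_sqr g : ggen C g ** ggen C g = 0.
Proof. by rewrite ggen_basis gmul_basis disjoints1 in_set1 eqxx. Qed.

End GrassmannAlgebra.

(** * Gaussian integers *)

Definition zi := (Z * Z)%type.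

Section GaussianArithmetic.
Local Open Scope Z_scope.

Definition zi_add (a b : zi) : zi := (a.1 + b.1, a.2 + b.2).
Definition zi_opp (a : zi) : zi := (- a.1, - a.2).
Definition zi_mul (a b : zi) : zi := (a.1 * b.1 - a.2 * b.2, a.1 * b.2 + a.2 * b.1).
Definition zi_conj (a : zi) : zi := (a.1, - a.2).
Definition zi_eq0 (a : zi) : bool := Z.eqb a.1 0 && Z.eqb a.2 0.
Definition zi_sum (f : nat -> zi) (s : seq nat) : zi := foldr (zi_add \o f) (0, 0) s.

Definition zi0 : zi := (0, 0).
Definition zi1 : zi := (1, 0).
Definition zi2 : zi := (2, 0).
Definition zi_i : zi := (0, 1).

End GaussianArithmetic.

Section GaussianIntegers.
Variable C : numClosedFieldType.

Definition z_val (z : Z) : C := (int_of_Z z)%:~R.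

Lemma z_valD a b : z_val (Z.add a b) = z_val a + z_val b.
Proof. by rewrite /z_val -intrD -(rmorphD int_of_Z). Qed.

Lemma z_valN a : z_val (Z.opp a) = - z_val a.
Proof. by rewrite /z_val -intrN -(rmorphN int_of_Z). Qed.

Lemma z_valM a b : z_val (Z.mul a b) = z_val a * z_val b.
Proof. by rewrite /z_val -intrM -(rmorphM int_of_Z). Qed.

Definition zi_val (a : zi) : C := z_val a.1 + z_val a.2 * 'i.

Lemma zi_valD a b : zi_val (zi_add a b) = zi_val a + zi_val b.
Proof. by rewrite /zi_val /= !z_valD; ring. Qed.

Lemma zi_valN a : zi_val (zi_opp a) = - zi_val a.
Proof. by rewrite /zi_val /= !z_valN; ring. Qed.

Lemma zi_valM a b : zi_val (zi_mul a b) = zi_val a * zi_val b.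
Proof.
rewrite /zi_val /= z_valD (z_valD _ (- _)) z_valN !z_valM.
have i2 : 1 + 'i * 'i = 0 :> C by rewrite -expr2 sqrCi addrN.
apply/eqP; rewrite -subr_eq0; apply/eqP.
transitivity (- (z_val a.2 * z_val b.2) * (1 + 'i * 'i)); first ring.
by rewrite i2 mulr0.
Qed.

Lemma zi_val_conj a : (zi_val a)^* = zi_val (zi_conj a).
Proof.
rewrite /zi_val /z_val /= !(rmorphD, rmorphM, rmorph_int).
rewrite [X in _ * X](_ : _ = - 'i); last exact: conjCi.
by rewrite -/(z_val _) -/(z_val _) -/(z_val _) z_valN mulrN mulNr.
Qed.

Lemma zi_val_eq0 a : zi_eq0 a -> zi_val a = 0.
Proof. by case: a => x y /andP[/= /Z.eqb_spec -> /Z.eqb_spec ->]; rewrite /zi_val mul0r addr0. Qed.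

Lemma zi_val0 : zi_val zi0 = 0. Proof. exact: zi_val_eq0. Qed.
Lemma zi_val1 : zi_val zi1 = 1. Proof. by rewrite /zi_val /= mul0r addr0. Qed.
Lemma zi_val2 : zi_val zi2 = 2. Proof. by rewrite /zi_val /= mul0r addr0. Qed.

Lemma zi_val_sum f s : zi_val (zi_sum f s) = \sum_(i <- s) zi_val (f i).
Proof. by elim: s => [|i s IH]; rewrite ?big_nil ?big_cons ?zi_val0 //= zi_valD IH. Qed.

End GaussianIntegers.

Definition gen_of_code (n : nat) : gen :=
  ((12 <= n)%N, (inord ((n %% 12) %/ 3), inord (n %% 3))).
Definition psi_code (a A : nat) : nat := (3 * a + A)%N.
Definition psib_code (a A : nat) : nat := (12 + (3 * a + A))%N.

Lemma gen_of_psi_code (a : 'I_4) (A : 'I_3) : gen_of_code (psi_code a A) = (false, (a, A)).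
Proof.
have ha := ltn_ord a; have hA := ltn_ord A.
rewrite /gen_of_code /psi_code; congr (_, (_, _)); last 2 first.
- by apply: val_inj; rewrite /= inordK; lia.
- by apply: val_inj; rewrite /= inordK; lia.
by apply/negbTE; rewrite -ltnNge; lia.
Qed.

Lemma gen_of_psib_code (a : 'I_4) (A : 'I_3) : gen_of_code (psib_code a A) = (true, (a, A)).
Proof.
have ha := ltn_ord a; have hA := ltn_ord A.
by rewrite /gen_of_code /psib_code; congr (_, (_, _)); apply: val_inj; rewrite /= inordK; lia.
Qed.

Lemma gen_of_code_inj : {in [pred n | n < 24]%N &, injective gen_of_code}.
Proof.
move=> n m; rewrite !inE => hn hm [e1 e2 e3].
have /= := congr1 val e2; have /= := congr1 val e3.
by rewrite !inordK; lia.
Qed.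

Definition word := seq nat.
Definition comb := seq (zi * word).

Definition word_wf (w : word) : bool := all (fun n => n < 24)%N w.

Definition comb_mul (p q : comb) : comb :=
  [seq (zi_mul t.1 u.1, t.2 ++ u.2) | t <- p, u <- q].

Definition comb_scale (k : zi) (p : comb) : comb :=
  if zi_eq0 k then [::] else [seq (zi_mul k t.1, t.2) | t <- p].

(* [p] is only evaluated when [k] is nonzero: this prunes most of the sums. *)
Definition comb_scale_lazy (k : zi) (p : unit -> comb) : comb :=
  if zi_eq0 k then [::] else comb_scale k (p tt).

Section CombinationValue.
Variable C : numClosedFieldType.
Local Notation Grass := (Grass C).

Definition word_val (w : word) : Grass :=
  foldr (fun n x => ggen C (gen_of_code n) ** x) (gbasis C set0) w.

Definition comb_val (p : comb) : Grass := \sum_(t <- p) zi_val C t.1 *g word_val t.2.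

Lemma word_val_cat w1 w2 : word_val (w1 ++ w2) = word_val w1 ** word_val w2.
Proof. by elim: w1 => [|n w IH] /=; rewrite ?gmul1l // IH gmulA. Qed.

Lemma word_val1 n : word_val [:: n] = ggen C (gen_of_code n).
Proof. by rewrite /= gmul1r. Qed.

Lemma comb_val_nil : comb_val [::] = 0.
Proof. by rewrite /comb_val big_nil. Qed.

Lemma comb_val_cons t p : comb_val (t :: p) = zi_val C t.1 *g word_val t.2 + comb_val p.
Proof. by rewrite /comb_val big_cons. Qed.

Lemma comb_val_cat p q : comb_val (p ++ q) = comb_val p + comb_val q.
Proof. by rewrite /comb_val big_cat. Qed.

Lemma comb_val_flatten I (r : seq I) (f : I -> comb) :
  comb_val (flatten [seq f i | i <- r]) = \sum_(i <- r) comb_val (f i).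
Proof.
elim: r => [|i r IH]; first by rewrite big_nil comb_val_nil.
by rewrite /= comb_val_cat IH big_cons.
Qed.

Lemma comb_val_flatten_ord (f : nat -> comb) n :
  comb_val (flatten [seq f i | i <- index_iota 0 n]) = \sum_(i < n) comb_val (f i).
Proof. by rewrite comb_val_flatten big_mkord. Qed.

Lemma comb_val_scale k p : comb_val (comb_scale k p) = zi_val C k *g comb_val p.
Proof.
rewrite /comb_scale; case: ifP => [/zi_val_eq0 -> | _]; first by rewrite gscale0 comb_val_nil.
elim: p => [|t p IH]; first by rewrite comb_val_nil gscaler0.
by rewrite /= !comb_val_cons IH gscaleDr gscaleA zi_valM.
Qed.

Lemma comb_val_scale_lazy k p :
  comb_val (comb_scale_lazy k (fun _ => p)) = zi_val C k *g comb_val p.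
Proof.
rewrite /comb_scale_lazy; case: ifP => [/zi_val_eq0 -> | _]; last exact: comb_val_scale.
by rewrite gscale0 comb_val_nil.
Qed.

Lemma comb_val_mul p q : comb_val (comb_mul p q) = comb_val p ** comb_val q.
Proof.
elim: p => [|t p IH]; first by rewrite comb_val_nil gmul0l.
rewrite /comb_mul allpairs_cons comb_val_cat IH comb_val_cons gmulDl; congr (_ + _).
rewrite gmulZl /comb_val gmul_sumr big_map gscale_sumr; apply: eq_bigr=> u _.
by rewrite gmulZr /= zi_valM word_val_cat gscaleA.
Qed.

End CombinationValue.

(** * Normal forms *)

(* Words are kept strictly decreasing; the boolean records the parity of the
   transpositions performed, and [None] signals a repeated generator. *)
Fixpoint word_insert (n : nat) (w : word) : option (bool * word) :=
  match w with
  | [::] => Some (false, [:: n])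
  | k :: w' =>
      if n == k then None
      else if (k < n)%N then Some (false, n :: w)
      else if word_insert n w' is Some (s, r) then Some (~~ s, k :: r) else None
  end.

Definition word_normalize (w : word) : option (bool * word) :=
  foldr (fun n o => if o is Some (s, r) then
                      if word_insert n r is Some (s', r') then Some (s (+) s', r') else None
                    else None)
        (Some (false, [::])) w.

Definition comb_normalize (p : comb) : comb :=
  foldr (fun t acc => if word_normalize t.2 is Some (s, r)
                      then (if s then zi_opp t.1 else t.1, r) :: acc else acc) [::] p.

Fixpoint word_lex (s t : word) : bool :=
  match s, t with
  | [::], _ => true
  | _ :: _, [::] => false
  | x :: s', y :: t' => (x < y)%N || (x == y) && word_lex s' t'
  end.

Fixpoint comb_collect (t : zi * word) (p : comb) : comb :=
  match p with
  | [::] => [:: t]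
  | u :: p' => if t.2 == u.2 then comb_collect (zi_add t.1 u.1, t.2) p'
               else t :: comb_collect u p'
  end.

(* Soundness only uses that [sort] permutes; sorting makes equal words adjacent,
   so that [comb_collect] merges them. *)
Definition comb_eq0 (p : comb) : bool :=
  all (word_wf \o snd) p &&
  if sort (fun t u => word_lex t.2 u.2) (comb_normalize p) is t :: p'
  then all (zi_eq0 \o fst) (comb_collect t p') else true.

Definition comb_eqb (p q : comb) : bool := comb_eq0 (p ++ comb_scale (zi_opp zi1) q).

Section NormalForm.
Variable C : numClosedFieldType.
Local Notation word_val := (word_val C).
Local Notation comb_val := (comb_val C).

Definition signed_word_val (o : option (bool * word)) : Grass C :=
  if o is Some (s, r) then (-1) ^+ s *g word_val r else 0.

Lemma mem_word_insert n w s r : word_insert n w = Some (s, r) -> {subset r <= n :: w}.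
Proof.
elim: w s r => [|k w IH] s r /=; first by case=> _ <-.
case: eqP => // _; case: ifP => _; first by case=> _ <-.
case e: (word_insert n w) => [[s' r']|] // [_ <-] x; rewrite !inE.
by case/orP=> [-> | /(IH _ _ e)]; rewrite ?orbT // inE => /orP[-> | ->]; rewrite ?orbT.
Qed.

Lemma word_val_insert n w : word_wf (n :: w) ->
  ggen C (gen_of_code n) ** word_val w = signed_word_val (word_insert n w).
Proof.
elim: w => [|k w IH] /=; first by rewrite /= expr0 gscale1.
case/and3P=> hn hk hw; case: eqP => [-> | /eqP nk]; first by rewrite -gmulA ggen_sqr gmul0l.
case: ifP => _; first by rewrite /= expr0 gscale1.
rewrite -gmulA ggen_anticomm; last first.
  by apply: contra nk => /eqP/gen_of_code_inj; rewrite !inE => /(_ hn hk) ->.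
rewrite gmulNl gmulA IH /=; last by rewrite hn.
case: (word_insert n w) => [[s r]|] /=; last by rewrite gmul0r oppr0.
by rewrite gmulZr -gscaleN1 gscaleA signrN mulN1r.
Qed.

Lemma mem_word_normalize w s r : word_normalize w = Some (s, r) -> {subset r <= w}.
Proof.
elim: w s r => [|n w IH] s r; first by case=> _ <-.
rewrite /word_normalize /= -/(word_normalize w).
case e: (word_normalize w) => [[s1 r1]|] //.
case e': (word_insert n r1) => [[s2 r2]|] // [_ <-] x /(mem_word_insert e').
by rewrite !inE => /orP[-> // | /(IH _ _ e) ->]; rewrite orbT.
Qed.

Lemma word_val_normalize w : word_wf w -> word_val w = signed_word_val (word_normalize w).
Proof.
elim: w => [|n w IH] /=; first by rewrite expr0 gscale1.
case/andP=> hn hw; rewrite /word_normalize /= -/(word_normalize w) IH //.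
case e: (word_normalize w) => [[s r]|] /=; last by rewrite gmul0r.
rewrite gmulZr word_val_insert; last first.
  by rewrite /= hn; apply/allP=> x /(mem_word_normalize e) /(allP hw).
case: (word_insert n r) => [[s' r']|] /=; last by rewrite gscaler0.
by rewrite gscaleA signr_addb.
Qed.

Lemma comb_val_normalize p :
  all (word_wf \o snd) p -> comb_val (comb_normalize p) = comb_val p.
Proof.
elim: p => [|t p IH] //= /andP[ht hp].
rewrite comb_val_cons (word_val_normalize ht) -IH // /comb_normalize /= -/(comb_normalize p).
case: (word_normalize t.2) => [[s r]|] /=; last by rewrite gscaler0 add0r.
by rewrite comb_val_cons gscaleA; case: s; rewrite /= ?zi_valN ?expr1 ?expr0 ?mulrN1 ?mulr1.
Qed.

Lemma comb_val_collect t p : comb_val (comb_collect t p) = comb_val (t :: p).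
Proof.
elim: p t => [|u p IH] t //=; case: eqP => [e | _]; rewrite !(comb_val_cons, IH) //=.
by rewrite zi_valD gscaleDl e addrA.
Qed.

Lemma comb_eq0P p : comb_eq0 p -> comb_val p = 0.
Proof.
case/andP=> wf; rewrite -(comb_val_normalize wf).
case: (sort _ _) (perm_sort (fun t u : zi * word => word_lex t.2 u.2) (comb_normalize p))
  => [|t p'] perm; rewrite /comb_val -(perm_big _ (permEl perm)) -/(comb_val _) ?comb_val_nil //.
rewrite -comb_val_collect => hz; apply: big1_seq => u /andP[_ /(allP hz) /zi_val_eq0 ->].
exact: gscale0.
Qed.

Lemma comb_eqbP p q : comb_eqb p q -> comb_val p = comb_val q.
Proof.
move/comb_eq0P; rewrite comb_val_cat comb_val_scale zi_valN zi_val1 gscaleN1.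
by move/eqP; rewrite subr_eq0 => /eqP.
Qed.

End NormalForm.

Definition sigma_zi (mu i j : nat) : zi :=
  let tab := match mu with
    | 0 => [:: [:: zi1; zi0]; [:: zi0; zi1]]
    | 1 => [:: [:: zi0; zi1]; [:: zi1; zi0]]
    | 2 => [:: [:: zi0; zi_opp zi_i]; [:: zi_i; zi0]]
    | _ => [:: [:: zi1; zi0]; [:: zi0; zi_opp zi1]]
    end in
  nth zi0 (nth [::] tab i) j.

Definition sigmat_zi (mu i j : nat) : zi :=
  if mu == 0%N then sigma_zi mu i j else zi_opp (sigma_zi mu i j).

Definition gamma_up_zi (mu a b : nat) : zi :=
  if (a < 2)%N then (if (b < 2)%N then zi0 else sigmat_zi mu a (b - 2))
  else (if (b < 2)%N then sigma_zi mu (a - 2) b else zi0).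

Definition veps_zi (i j : nat) : zi :=
  nth zi0 (nth [::] [:: [:: zi0; zi1]; [:: zi_opp zi1; zi0]] i) j.

Definition eps_s_zi (a c : nat) : zi :=
  if (a < 2)%N then (if (c < 2)%N then veps_zi a c else zi0)
  else (if (c < 2)%N then zi0 else zi_opp (veps_zi (a - 2) (c - 2))).

Definition beta2_zi (a d : nat) : zi :=
  if (a < 2)%N then (if (d < 2)%N then zi0 else if a == (d - 2)%N then zi1 else zi0)
  else (if (d < 2)%N then (if (a - 2)%N == d then zi1 else zi0) else zi0).

Definition eta_zi (mu nu : nat) : zi :=
  if mu == nu then (if mu == 0%N then zi1 else zi_opp zi1) else zi0.

Definition gamma_lo_zi (mu c b : nat) : zi :=
  zi_sum (fun a => zi_mul (gamma_up_zi mu a b) (eps_s_zi a c)) (index_iota 0 4).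

Definition gammaL_zi (mu c b : nat) : zi :=
  zi_sum (fun nu => zi_mul (eta_zi mu nu) (gamma_lo_zi nu c b)) (index_iota 0 4).

(* Twice [beta4], which has Gaussian integer entries. *)
Definition beta4_twice_zi (a b c d : nat) : zi :=
  zi_sum (fun mu => zi_mul (zi_conj (gammaL_zi mu a b)) (gamma_lo_zi mu c d)) (index_iota 0 4).

Definition gcol_zi (A B : nat) : zi := if A == B then zi1 else zi0.

Definition eps3_zi (A B D : nat) : zi :=
  let z := Z.of_nat in
  (Z.div (Z.mul (Z.mul (Z.sub (z A) (z B)) (Z.sub (z B) (z D))) (Z.sub (z D) (z A))) (Zpos 2),
   Z0).

Lemma block_mx22E (R : nmodType) (A B C D : 'M[R]_2) (i j : 'I_4) :
  (block_mx A B C D : 'M_(2 + 2)) i j =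
  if (i < 2)%N then (if (j < 2)%N then A (inord i) (inord j) else B (inord i) (inord (j - 2)))
  else (if (j < 2)%N then C (inord (i - 2)) (inord j) else D (inord (i - 2)) (inord (j - 2))).
Proof.
rewrite -[i](splitK (i : 'I_(2 + 2))) -[j](splitK (j : 'I_(2 + 2))).
case: (split _) => i'; case: (split _) => j';
  rewrite /= ?block_mxEul ?block_mxEur ?block_mxEdl ?block_mxEdr /=
          ?ltn_ord ?ltnNge ?leq_addr /= ?addKn ?inord_val //.
Qed.

Section ConstantTables.
Variable C : numClosedFieldType.
Local Notation zi_val := (zi_val C).

Let z_val0 : z_val C Z0 = 0. Proof. by []. Qed.
Let z_val1 : z_val C (Zpos 1) = 1. Proof. by []. Qed.
Let z_valN1 : z_val C (Zneg 1) = -1. Proof. by rewrite -(z_valN C (Zpos 1)). Qed.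

Ltac zi_lit := rewrite /zi_val /= ?z_val0 ?z_val1 ?z_valN1; ring.

Lemma sigmaE (mu : 'I_4) i j : (i < 2)%N -> (j < 2)%N ->
  sigma C mu (inord i) (inord j) = zi_val (sigma_zi mu i j).
Proof.
move=> hi hj; rewrite /sigma /tab2 mxE !inordK //.
by case: mu => [[|[|[|[|?]]]] ?] //=; case: i hi => [|[|?]] //= _; case: j hj => [|[|?]] //= _;
  zi_lit.
Qed.

Lemma sigmatE (mu : 'I_4) i j : (i < 2)%N -> (j < 2)%N ->
  sigmat C mu (inord i) (inord j) = zi_val (sigmat_zi mu i j).
Proof.
move=> hi hj; rewrite /sigmat /sigmat_zi; case: eqP => _; first exact: sigmaE.
by rewrite mxE sigmaE // zi_valN.
Qed.

Lemma gamma_upE (mu a b : 'I_4) : gamma_up C mu a b = zi_val (gamma_up_zi mu a b).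
Proof.
have ha := ltn_ord a; have hb := ltn_ord b.
rewrite /gamma_up block_mx22E /gamma_up_zi; case: ifP => h1; case: ifP => h2;
  rewrite ?sigmaE ?sigmatE ?mxE ?zi_val0 //; lia.
Qed.

Lemma vepsE i j : (i < 2)%N -> (j < 2)%N -> veps C (inord i) (inord j) = zi_val (veps_zi i j).
Proof.
move=> hi hj; rewrite /veps /tab2 mxE !inordK //.
by case: i hi => [|[|?]] //= _; case: j hj => [|[|?]] //= _; zi_lit.
Qed.

Lemma eps_sE (a c : 'I_4) : eps_s C a c = zi_val (eps_s_zi a c).
Proof.
have ha := ltn_ord a; have hc := ltn_ord c.
rewrite /eps_s block_mx22E /eps_s_zi; case: ifP => h1; case: ifP => h2.
- by rewrite vepsE //; lia.
- by rewrite mxE zi_val0.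
- by rewrite mxE zi_val0.
- by rewrite [LHS]mxE vepsE ?zi_valN //; lia.
Qed.

Lemma beta2E (a d : 'I_4) : beta2 C a d = zi_val (beta2_zi a d).
Proof.
have ha := ltn_ord a; have hd := ltn_ord d.
rewrite /beta2 block_mx22E /beta2_zi; case: ifP => h1; case: ifP => h2;
  rewrite ?mxE ?zi_val0 // -val_eqE /= !inordK; try lia;
  by case: ifP; rewrite ?zi_val1 ?zi_val0.
Qed.

Lemma etaE (mu nu : 'I_4) : eta C mu nu = zi_val (eta_zi mu nu).
Proof.
rewrite /eta /eta_zi -val_eqE.
by case: ifP => _; [case: ifP => _ |]; rewrite ?zi_valN ?zi_val1 ?zi_val0.
Qed.

Lemma gcolE (A B : 'I_3) : gcol C A B = zi_val (gcol_zi A B).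
Proof. by rewrite /gcol /gcol_zi -val_eqE; case: ifP; rewrite ?zi_val1 ?zi_val0. Qed.

Lemma eps3E (A B D : 'I_3) : eps3 C A B D = zi_val (eps3_zi A B D).
Proof.
have half (n : int) (z : Z) : n = (int_of_Z z * 2)%R -> n%:~R / 2 = z_val C z.
  by move=> ->; rewrite intrM -mulrA mulfV ?mulr1 // (_ : 2%:~R = 2%:R :> C) // pnatr_eq0.
rewrite /eps3 /zi_val z_val0 mul0r addr0; apply: half.
by case: A => [[|[|[|?]]] ?] //; case: B => [[|[|[|?]]] ?] //; case: D => [[|[|[|?]]] ?].
Qed.

Lemma gamma_loE (mu c b : 'I_4) : gamma_lo C mu c b = zi_val (gamma_lo_zi mu c b).
Proof.
rewrite /gamma_lo /gamma_lo_zi zi_val_sum big_mkord; apply: eq_bigr=> a _.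
by rewrite zi_valM gamma_upE eps_sE.
Qed.

Lemma gammaLE (mu c b : 'I_4) : gammaL C mu c b = zi_val (gammaL_zi mu c b).
Proof.
rewrite /gammaL /gammaL_zi zi_val_sum big_mkord; apply: eq_bigr=> nu _.
by rewrite zi_valM etaE gamma_loE.
Qed.

Lemma beta4E (a b c d : 'I_4) : beta4 C a b c d = 2^-1 * zi_val (beta4_twice_zi a b c d).
Proof.
rewrite /beta4 /beta4_twice_zi zi_val_sum big_mkord; congr (_ * _); apply: eq_bigr=> mu _.
by rewrite zi_valM -zi_val_conj gammaLE gamma_loE.
Qed.

End ConstantTables.

(** * Reification of both sides *)

Definition psi_comb (a A : nat) : comb := [:: (zi1, [:: psi_code a A])].
Definition psib_comb (a A : nat) : comb := [:: (zi1, [:: psib_code a A])].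

Definition Jc_comb (a b : nat) : comb :=
  flatten [seq flatten [seq comb_scale (gcol_zi A B) (comb_mul (psib_comb a A) (psi_comb b B))
                       | B <- index_iota 0 3] | A <- index_iota 0 3].

Definition X2_term_comb (a b c d e f : nat) : comb :=
  comb_mul (comb_mul (Jc_comb a d) (Jc_comb b e)) (Jc_comb c f) ++
  comb_scale zi2 (comb_mul (comb_mul (Jc_comb a e) (Jc_comb b f)) (Jc_comb c d)).

(* The factor 4 of [X2] against the 1/2 of [beta4] leaves a factor 2. *)
Definition X2_comb : comb :=
  flatten [seq flatten [seq flatten [seq flatten [seq flatten [seq flatten [seq
    comb_scale_lazy (zi_mul zi2 (zi_mul (beta4_twice_zi b c e f) (beta2_zi a d)))
                    (fun _ => X2_term_comb a b c d e f)
  | f <- index_iota 0 4] | e <- index_iota 0 4] | d <- index_iota 0 4]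
  | c <- index_iota 0 4] | b <- index_iota 0 4] | a <- index_iota 0 4].

Definition psiU_comb (A d : nat) : comb :=
  flatten [seq comb_scale (gcol_zi A B) (psi_comb d B) | B <- index_iota 0 3].

Definition Vc_comb (D a b : nat) : comb :=
  flatten [seq flatten [seq comb_scale (eps3_zi A B D) (comb_mul (psi_comb a A) (psi_comb b B))
                       | B <- index_iota 0 3] | A <- index_iota 0 3].

Definition rhs_comb (A B : nat) : comb :=
  flatten [seq flatten [seq flatten [seq flatten [seq flatten [seq flatten [seq
    comb_scale_lazy (zi_mul (zi_conj (gammaL_zi mu g h)) (zi_conj (eps3_zi D G H))) (fun _ =>
      flatten [seq flatten [seq flatten [seq flatten [seq
        comb_scale_lazy (zi_add (zi_mul (zi_mul zi2 (beta2_zi c e)) (gamma_lo_zi mu f d))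
                                (zi_mul (beta2_zi c d) (gamma_lo_zi mu f e)))
          (fun _ => comb_mul (comb_mul (comb_mul (comb_mul (psib_comb h H) (psib_comb g G))
                                                 (psib_comb c D)) (psiU_comb A d)) (Vc_comb B e f))
      | f <- index_iota 0 4] | e <- index_iota 0 4] | d <- index_iota 0 4] | c <- index_iota 0 4])
  | H <- index_iota 0 3] | G <- index_iota 0 3] | D <- index_iota 0 3]
  | h <- index_iota 0 4] | g <- index_iota 0 4] | mu <- index_iota 0 4].

Definition lemma2_check : bool :=
  let X := X2_comb in
  all (fun A => all (fun B => comb_eqb (comb_scale (gcol_zi A B) X) (rhs_comb A B))
                    (iota 0 3)) (iota 0 3).

Lemma lemma2_check_true : lemma2_check.
Proof. by vm_compute. Qed.

Section Reification.
Variable C : numClosedFieldType.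
Local Notation comb_val := (comb_val C).
Local Notation zi_val := (zi_val C).

Lemma psiE (a : 'I_4) (A : 'I_3) : psi C a A = comb_val (psi_comb a A).
Proof. by rewrite comb_val_cons comb_val_nil addr0 zi_val1 gscale1 word_val1 gen_of_psi_code. Qed.

Lemma psibE (a : 'I_4) (A : 'I_3) : psib C a A = comb_val (psib_comb a A).
Proof. by rewrite comb_val_cons comb_val_nil addr0 zi_val1 gscale1 word_val1 gen_of_psib_code. Qed.

Lemma JcE (a b : 'I_4) : Jc C a b = comb_val (Jc_comb a b).
Proof.
rewrite /Jc_comb comb_val_flatten_ord; apply: eq_bigr=> A _.
rewrite comb_val_flatten_ord; apply: eq_bigr=> B _.
by rewrite comb_val_scale comb_val_mul gcolE psiE psibE.
Qed.

Lemma X2E : X2 C = comb_val X2_comb.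
Proof.
rewrite /X2 /X2_comb gscale_sumr comb_val_flatten_ord; apply: eq_bigr=> a _.
rewrite gscale_sumr comb_val_flatten_ord; apply: eq_bigr=> b _.
rewrite gscale_sumr comb_val_flatten_ord; apply: eq_bigr=> c _.
rewrite gscale_sumr comb_val_flatten_ord; apply: eq_bigr=> d _.
rewrite gscale_sumr comb_val_flatten_ord; apply: eq_bigr=> e _.
rewrite gscale_sumr comb_val_flatten_ord; apply: eq_bigr=> f _.
rewrite comb_val_scale_lazy /X2_term_comb comb_val_cat comb_val_scale !comb_val_mul !JcE.
rewrite gscaleA beta4E beta2E !zi_valM zi_val2; congr (_ *g _); by field.
Qed.

Lemma psiUE (A : 'I_3) (d : 'I_4) : psiU C A d = comb_val (psiU_comb A d).
Proof.
rewrite /psiU_comb comb_val_flatten_ord; apply: eq_bigr=> B _.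
by rewrite comb_val_scale gcolE psiE.
Qed.

Lemma VcE (D : 'I_3) (a b : 'I_4) : Vc C D a b = comb_val (Vc_comb D a b).
Proof.
rewrite /Vc_comb comb_val_flatten_ord; apply: eq_bigr=> A _.
rewrite comb_val_flatten_ord; apply: eq_bigr=> B _.
by rewrite comb_val_scale comb_val_mul eps3E !psiE.
Qed.

Lemma rhsE (A B : 'I_3) : rhs_lemma2 C A B = comb_val (rhs_comb A B).
Proof.
rewrite /rhs_lemma2 /rhs_comb comb_val_flatten_ord; apply: eq_bigr=> mu _.
rewrite comb_val_flatten_ord; apply: eq_bigr=> g _.
rewrite comb_val_flatten_ord; apply: eq_bigr=> h _.
rewrite comb_val_flatten_ord; apply: eq_bigr=> D _.
rewrite comb_val_flatten_ord; apply: eq_bigr=> G _.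
rewrite comb_val_flatten_ord; apply: eq_bigr=> H _.
rewrite comb_val_scale_lazy comb_val_flatten_ord gscale_sumr; apply: eq_bigr=> c _.
rewrite comb_val_flatten_ord gscale_sumr; apply: eq_bigr=> d _.
rewrite comb_val_flatten_ord gscale_sumr; apply: eq_bigr=> e _.
rewrite comb_val_flatten_ord gscale_sumr; apply: eq_bigr=> f _.
rewrite comb_val_scale_lazy gscaleA !comb_val_mul psiUE VcE !psibE; congr (_ *g _).
by rewrite gammaLE eps3E !beta2E !gamma_loE !zi_val_conj !(zi_valM, zi_valD) zi_val2.
Qed.

End Reification.

Theorem lemma2 (C : numClosedFieldType) (A B : 'I_3) :
  (gcol C A B *g X2 C) = rhs_lemma2 C A B.
Proof.
rewrite X2E gcolE -comb_val_scale rhsE; apply: comb_eqbP.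
have /allP/(_ A) := lemma2_check_true; rewrite mem_iota ltn_ord => /(_ isT).
by move/allP/(_ B); rewrite mem_iota ltn_ord => /(_ isT).
Qed.
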